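(* Let $\mathfrak{g}$ be a complex simple Lie algebra of rank $l$ with Cartan matrix $A=(a_{ij})_{i,j\in I}$, $I=\{1,\dots,l\}$, and let $D=\operatorname{diag}(d_1,\dots,d_l)$ with $d_i$ coprime positive integers such that $DA$ is symmetric. Let $\mathcal{P}$ be the group (under componentwise multiplication) of $l$-tuples $P=(P_1(u),\dots,P_l(u))$ of nonzero rational functions in $u$ over $\mathbb{C}$. For $j\in I$ and $P\in\mathcal{P}$ define $T_j(P)\in\mathcal{P}$ by \begin{align*} (T_j(P))_i&=P_i(u) &&\text{if } a_{ij}=0,\\ (T_j(P))_i&=P_i(u)\,P_j\!\left(u-\tfrac{d_i}{2}\right) &&\text{if } a_{ij}=-1,\\ (T_j(P))_i&=P_i(u)\,P_j(u-1)\,P_j(u) &&\text{if } a_{ij}=-2,\\ (T_j(P))_i&=P_i(u)\,P_j\!\left(u-\tfrac32\right)P_j\!\left(u-\tfrac12\right)P_j\!\left(u+\tfrac12\right) &&\text{if } a_{ij}=-3,\\ (T_j(P))_j&=\frac{1}{P_j(u-d_j)}. \end{align*} Then these formulas define an action of the braid group $\mathcal{B}$ of $\mathfrak{g}$ on $\mathcal{P}$, in which the generator $T_j$ acts by $P\mapsto T_j(P)$; for $w$ in the Weyl group with reduced expression $w=s_{r_1}\cdots s_{r_p}$ one sets $T_w(P)=T_{r_1}(T_{r_2}(\cdots T_{r_p}(P)))$.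
   Context: The braid group $\mathcal{B}$ of $\mathfrak{g}$ is the group generated by $T_i$, $i\in I$, with relations $T_iT_j=T_jT_i$ if $a_{ij}=0$; $T_iT_jT_i=T_jT_iT_j$ if $a_{ij}a_{ji}=1$; $(T_iT_j)^2=(T_jT_i)^2$ if $a_{ij}a_{ji}=2$; $(T_iT_j)^3=(T_jT_i)^3$ if $a_{ij}a_{ji}=3$. The $s_i$ are the simple reflections of the Weyl group. *)

From mathcomp Require Import all_boot all_algebra fraction.
From mathcomp Require Import Rstruct.
From mathcomp Require Import complex.
Set Implicit Arguments. Unset Strict Implicit. Unset Printing Implicit Defensive.
Import GRing.Theory Num.Theory.
Local Open Scope ring_scope.

Definition C : fieldType := complex Rdefinitions.R.

Definition ratfun : fieldType := {fraction {poly C}}.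

Definition shift (c : C) (f : ratfun) : ratfun :=
  let r := repr f in
  (tofrac (r.1 \Po ('X - c%:P))) / (tofrac (r.2 \Po ('X - c%:P))).

Definition is_GCM (l : nat) (A : 'M[int]_l) : Prop :=
  (forall i, A i i = 2%:Z) /\
  (forall i j, i != j -> A i j <= 0) /\
  (forall i j, A i j = 0 <-> A j i = 0).

Definition indecomposable (l : nat) (A : 'M[int]_l) : Prop :=
  forall J : {set 'I_l}, J != set0 -> J != setT ->
    exists j k, j \in J /\ k \notin J /\ A j k != 0.

Definition symmetrizes (l : nat) (d : 'I_l -> nat) (A : 'M[int]_l) : Prop :=
  forall i j, (d i)%:Z * A i j = (d j)%:Z * A j i.

Definition coprime_pos (l : nat) (d : 'I_l -> nat) : Prop :=
  (forall i, 0 < d i)%N /\ (\big[gcdn/0]_(i < l) d i = 1)%N.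

(* finite type: the symmetrized matrix DA is positive definite *)
Definition pos_def_sym (l : nat) (d : 'I_l -> nat) (A : 'M[int]_l) : Prop :=
  forall x : 'I_l -> rat, (exists i, x i != 0) ->
    0 < \sum_(i < l) \sum_(j < l) x i * ((d i)%:Z * A i j)%:~R * x j.

(* A is the Cartan matrix of a complex simple Lie algebra of rank l (with
   symmetrizer d): an indecomposable generalized Cartan matrix of finite
   type, with D = diag(d) as in the statement. *)
Definition simple_cartan (l : nat) (A : 'M[int]_l) (d : 'I_l -> nat) : Prop :=
  (0 < l)%N /\ is_GCM A /\ indecomposable A /\ symmetrizes d A /\
  coprime_pos d /\ pos_def_sym d A.

Definition tuple_rf (l : nat) := 'I_l -> ratfun.

Definition inP (l : nat) (P : tuple_rf l) : Prop := forall i, P i != 0.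

Definition half (x : C) : C := x / 2%:R.

Definition Tmap (l : nat) (A : 'M[int]_l) (d : 'I_l -> nat) (j : 'I_l)
  (P : tuple_rf l) : tuple_rf l :=
  fun i =>
    if i == j then (shift (d j)%:R (P j))^-1
    else if A i j == 0 then P i
    else if A i j == -1 then P i * shift (half (d i)%:R) (P j)
    else if A i j == -2 then P i * shift 1 (P j) * P j
    else if A i j == -3 then
      P i * shift (half 3%:R) (P j) * shift (half 1) (P j)
          * shift (- half 1) (P j)
    else P i. (* unreachable for finite type *)

Definition braid_m (l : nat) (A : 'M[int]_l) (i j : 'I_l) : nat :=
  let p := A i j * A j i in
  if p == 0 then 2 else if p == 1 then 3 else if p == 2 then 4 else 6.

Fixpoint alt {T : Type} (f g : T -> T) (m : nat) : T -> T :=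
  match m with
  | 0 => id
  | m'.+1 => fun x => f (alt g f m' x)
  end.

(* Each T_j is inverted by solving its defining formulas for P, so only the
   braid relations need an argument.  Fix i != j and P.  Every tuple obtained
   from P by applying T_i and T_j has i- and j-components that are Laurent
   monomials in shifts of P_i and P_j by integer multiples of a common step q,
   and its k-th component (k != i, j) is P_k Tfactor_ki(X) Tfactor_kj(Y) for
   such monomials X and Y, because the factor Tfactor_kj by which T_j
   multiplies P_k is multiplicative.  Both sides of a braid relation are thus
   obtained by a finite calculation on exponent lists, checked by evaluation.
   A common step q exists because the Cartan matrix is of finite type:
   a_ij a_ji <= 3 by positive definiteness, and the short node of a multiple
   bond has d = 1. *)

From HB Require Import structures.
From Pilot Require Import Defs.
From mathcomp Require Import all_boot all_order all_algebra fraction generic_quotient.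
From mathcomp Require Import Rstruct complex ring lra zify.
From Stdlib Require Import FunctionalExtensionality.
Set Implicit Arguments. Unset Strict Implicit. Unset Printing Implicit Defensive.
Import Order.TTheory GRing.Theory Num.Theory.
Local Open Scope ring_scope.

Section FractionRepr.
Local Open Scope quotient_scope.

Lemma fraction_reprE (R : idomainType) (x : {fraction R}) :
  x = tofrac \n_(repr x) / tofrac \d_(repr x).
Proof.
suff piE (r : {ratio R}) : \pi_({fraction R}) r = tofrac \n_r / tofrac \d_r.
  by rewrite -{1}[x]reprK piE.
have d0 : tofrac \d_r != 0 by rewrite tofrac_eq0 denom_ratioP.
apply: (mulIf d0); rewrite mulfVK //.
have tofracE (a : R) : tofrac a = \pi_({fraction R}) (Ratio a 1) by unlock tofrac.
rewrite !tofracE -[_ * _]/(FracField.mul _ _) -FracField.pi_mul.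
apply/eqmodP; rewrite /= FracField.equivfE /FracField.mulf.
by rewrite !numden_Ratio ?mulf_neq0 ?oner_eq0 ?denom_ratioP // !mulr1 mulrC.
Qed.

End FractionRepr.

Definition pshift (c : C) (p : {poly C}) : {poly C} := p \Po ('X - c%:P).

Lemma pshift_eq0 c p : (pshift c p == 0) = (p == 0).
Proof. by rewrite /pshift comp_poly2_eq0 // size_XsubC. Qed.

Lemma pshiftD c p q : pshift c (p + q) = pshift c p + pshift c q.
Proof. exact: comp_polyD. Qed.

Lemma pshiftM c p q : pshift c (p * q) = pshift c p * pshift c q.
Proof. exact: comp_polyM. Qed.

Lemma pshift1 c : pshift c 1 = 1.
Proof. exact: comp_polyC. Qed.

Lemma pshiftA a b p : pshift a (pshift b p) = pshift (a + b) p.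
Proof.
rewrite /pshift -comp_polyA comp_polyB comp_polyX comp_polyC.
by rewrite rmorphD opprD addrA.
Qed.

Lemma shift_frac c (p q : {poly C}) : q != 0 ->
  shift c (tofrac p / tofrac q) = tofrac (pshift c p) / tofrac (pshift c q).
Proof.
move=> q0; rewrite /shift -/(pshift c _) -/(pshift c _).
set f := tofrac p / tofrac q.
have d0 : \d_(repr f) != 0 by exact: denom_ratioP.
have cross : \n_(repr f) * q = p * \d_(repr f).
  apply/eqP; rewrite -tofrac_eq !tofracM -eqr_div ?tofrac_eq0 //.
  by rewrite -fraction_reprE.
apply/eqP; rewrite eqr_div ?tofrac_eq0 ?pshift_eq0 //.
by rewrite -!tofracM -!pshiftM cross.
Qed.

Section ShiftMorphism.
Variable c : C.

Lemma shiftD (f g : ratfun) : shift c (f + g) = shift c f + shift c g.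
Proof.
rewrite [f]fraction_reprE [g]fraction_reprE.
move: (denom_ratioP (repr f)) (denom_ratioP (repr g)) => bf bg.
rewrite addf_div ?tofrac_eq0 // -!tofracM -tofracD !shift_frac ?mulf_neq0 //.
by rewrite addf_div ?tofrac_eq0 ?pshift_eq0 // -!tofracM -tofracD pshiftD !pshiftM.
Qed.

Lemma shiftM (f g : ratfun) : shift c (f * g) = shift c f * shift c g.
Proof.
rewrite [f]fraction_reprE [g]fraction_reprE.
move: (denom_ratioP (repr f)) (denom_ratioP (repr g)) => bf bg.
by rewrite mulf_div -!tofracM !shift_frac ?mulf_neq0 // mulf_div -!tofracM !pshiftM.
Qed.

Lemma shift1 : shift c 1 = 1.
Proof. by rewrite -[1]divr1 -tofrac1 shift_frac ?oner_eq0 // pshift1. Qed.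

Lemma shift0 : shift c 0 = 0.
Proof. by apply: (@addrI _ (shift c 0)); rewrite -shiftD !addr0. Qed.

Fact shift_is_nmod_morphism : nmod_morphism (shift c).
Proof. exact: (shift0, shiftD). Qed.

Fact shift_is_monoid_morphism : monoid_morphism (shift c).
Proof. exact: (shift1, shiftM). Qed.

HB.instance Definition _ :=
  GRing.isNmodMorphism.Build ratfun ratfun (shift c) shift_is_nmod_morphism.
HB.instance Definition _ :=
  GRing.isMonoidMorphism.Build ratfun ratfun (shift c) shift_is_monoid_morphism.

End ShiftMorphism.

Lemma shiftA a b f : shift a (shift b f) = shift (a + b) f.
Proof.
rewrite [f]fraction_reprE; move: (\n_ _) (\d_ _) (denom_ratioP (repr f)) => p q q0.
by rewrite (shift_frac b _ q0) !shift_frac ?pshift_eq0 // !pshiftA.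
Qed.

Lemma shift_id f : shift 0 f = f.
Proof. by rewrite /shift /= polyC0 subr0 !comp_polyXr -fraction_reprE. Qed.

(* By definition [shift c f] is a quotient, so rewriting with ring laws would
   otherwise try to unify their patterns against its body. *)
Opaque shift.

Lemma shift_eq0 c f : (shift c f == 0) = (f == 0).
Proof. exact: fmorph_eq0. Qed.

Lemma shiftV c f : shift c f^-1 = (shift c f)^-1.
Proof. exact: fmorphV. Qed.

Lemma shiftXz c f (n : int) : shift c (f ^ n) = shift c f ^ n.
Proof.
case: n => n; first exact: rmorphXn.
by rewrite NegzE -!exprz_inv -shiftV; exact: rmorphXn.
Qed.

(* [:: (k_1, e_1); ...; (k_n, e_n)] encodes the Laurent monomial
   f(u - k_1 q)^e_1 ... f(u - k_n q)^e_n in the shifts of f by multiples of q. *)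
Definition shiftmon := seq (int * int).

Definition mon_inv (m : shiftmon) : shiftmon := [seq (p.1, - p.2) | p <- m].

Definition mon_comp (m n : shiftmon) : shiftmon :=
  [seq (a.1 + b.1, a.2 * b.2) | a <- m, b <- n].

(* A Fixpoint rather than a big sum, so that [vm_compute] evaluates it. *)
Fixpoint mon_mult (m : shiftmon) (k : int) : int :=
  if m is p :: m' then (if p.1 == k then p.2 else 0) + mon_mult m' k else 0.

Definition mon_eqb (m n : shiftmon) : bool :=
  all (fun k => mon_mult m k == mon_mult n k) (undup (map fst (m ++ n))).

Lemma prodrXz (R : fieldType) (I : Type) (r : seq I) (F : I -> R) (n : int) :
  (\prod_(i <- r) F i) ^ n = \prod_(i <- r) F i ^ n.
Proof. by apply: (big_morph (fun x => x ^ n)) => [x y|]; rewrite ?expfzMl ?exp1rz. Qed.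

Section ShiftMonomials.
Variable q : C.
Implicit Types (m n : shiftmon) (f g : ratfun).

Definition mon_eval m f : ratfun :=
  \prod_(p <- m) shift (p.1%:~R * q) f ^ p.2.

Lemma mon_eval_cat m n f : mon_eval (m ++ n) f = mon_eval m f * mon_eval n f.
Proof. exact: big_cat. Qed.

Lemma mon_eval_single k f : mon_eval [:: (k, 1)] f = shift (k%:~R * q) f.
Proof. by rewrite /mon_eval big_seq1 expr1z. Qed.

Lemma mon_eval_cons1 k m f :
  mon_eval ((k, 1) :: m) f = shift (k%:~R * q) f * mon_eval m f.
Proof. by rewrite /mon_eval big_cons expr1z. Qed.

Lemma mon_eval_neq0 m f : f != 0 -> mon_eval m f != 0.
Proof.
move=> f0; rewrite /mon_eval; elim: m => [|p m IH]; first by rewrite big_nil oner_eq0.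
rewrite big_cons; apply: mulf_neq0 IH.
by apply: expfz_neq0; rewrite shift_eq0.
Qed.

Lemma mon_evalM m f g : mon_eval m (f * g) = mon_eval m f * mon_eval m g.
Proof.
by rewrite /mon_eval -big_split; apply: eq_bigr => p _; rewrite rmorphM expfzMl.
Qed.

Lemma mon_eval_inv m f : mon_eval (mon_inv m) f = (mon_eval m f)^-1.
Proof.
rewrite /mon_eval big_map (big_morph _ (@invfM _) (@invr1 _)).
by apply: eq_bigr => p _; rewrite invr_expz.
Qed.

Lemma mon_eval_comp m n f : mon_eval m (mon_eval n f) = mon_eval (mon_comp m n) f.
Proof.
rewrite /mon_eval /mon_comp big_allpairs_dep; apply: eq_bigr => a _.
rewrite rmorph_prod prodrXz; apply: eq_bigr => b _.
by rewrite /= shiftXz shiftA exprz_exp rmorphD mulrDl (mulrC b.2).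
Qed.

Lemma mon_eval_mult m (s : seq int) f : f != 0 -> uniq s ->
  {subset map fst m <= s} ->
  mon_eval m f = \prod_(k <- s) shift (k%:~R * q) f ^ mon_mult m k.
Proof.
move=> f0 us; elim: m => [|p m IH] sub.
  by rewrite /mon_eval big_nil big1 // => k _; rewrite expr0z.
have ps : p.1 \in s by apply: sub; rewrite inE eqxx.
rewrite /mon_eval big_cons -/(mon_eval m f) IH; last first.
  by move=> k km; apply: sub; rewrite inE km orbT.
under [in RHS]eq_bigr => k _ do rewrite expfzDr ?shift_eq0 //.
rewrite big_split /=; congr (_ * _).
rewrite (bigD1_seq p.1) //= eqxx big1 ?mulr1 // => k.
by rewrite eq_sym => /negbTE ->; rewrite expr0z.
Qed.

Lemma mon_eval_eqb m n f : f != 0 -> mon_eqb m n -> mon_eval m f = mon_eval n f.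
Proof.
move=> f0 /allP eq_mult; have us := undup_uniq (map fst (m ++ n)).
rewrite !(mon_eval_mult f0 us) => [|k|k]; last 2 first.
- by rewrite mem_undup map_cat mem_cat => ->; rewrite orbT.
- by rewrite mem_undup map_cat mem_cat => ->.
by rewrite big_seq [RHS]big_seq; apply: eq_bigr => k /eq_mult/eqP ->.
Qed.

End ShiftMonomials.

Section TFactor.
Variables (l : nat) (A : 'M[int]_l) (d : 'I_l -> nat).
Implicit Types (f g : ratfun) (Q : tuple_rf l).

Definition Tfactor (k j : 'I_l) f : ratfun :=
  if A k j == -1 then shift (Defs.half (d k)%:R) f
  else if A k j == -2 then shift 1 f * f
  else if A k j == -3 then
    shift (Defs.half 3%:R) f * shift (Defs.half 1) f * shift (- Defs.half 1) f
  else 1.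

Lemma TmapE j Q k :
  Tmap A d j Q k =
  if k == j then (shift (d j)%:R (Q j))^-1 else Q k * Tfactor k j (Q j).
Proof.
rewrite /Tmap /Tfactor; case: (k == j); first reflexivity.
have [->|_] := eqVneq (A k j) 0; first by rewrite mulr1.
case: (A k j == -1); first reflexivity.
case: (A k j == -2); first by rewrite mulrA.
by case: (A k j == -3); rewrite ?mulr1 ?mulrA.
Qed.

Lemma Tfactor_simple k j f : A k j = -1 -> Tfactor k j f = shift (Defs.half (d k)%:R) f.
Proof. by rewrite /Tfactor => ->. Qed.

Lemma Tfactor_double k j f : A k j = -2 -> Tfactor k j f = shift 1 f * f.
Proof. by rewrite /Tfactor => ->. Qed.

Lemma Tfactor_triple k j f : A k j = -3 ->
  Tfactor k j f = shift (Defs.half 3%:R) f * shift (Defs.half 1) f * shift (- Defs.half 1) f.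
Proof. by rewrite /Tfactor => ->. Qed.

Lemma TfactorM k j f g : Tfactor k j (f * g) = Tfactor k j f * Tfactor k j g.
Proof.
rewrite /Tfactor !shiftM.
case: (A k j == -1); first reflexivity.
case: (A k j == -2); first exact: mulrACA.
case: (A k j == -3); last by rewrite mulr1.
move: (shift _ f) (shift _ f) (shift _ f) (shift _ g) (shift _ g) (shift _ g) => *; ring.
Qed.

Lemma Tfactor1 k j : Tfactor k j 1 = 1.
Proof.
rewrite /Tfactor !shift1.
by case: (A k j == -1); case: (A k j == -2); case: (A k j == -3); rewrite ?mulr1.
Qed.

Lemma Tfactor_neq0 k j f : f != 0 -> Tfactor k j f != 0.
Proof.
move=> f0; rewrite /Tfactor.
case: (A k j == -1); first by rewrite shift_eq0.
case: (A k j == -2); first by apply: mulf_neq0; rewrite ?shift_eq0.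
case: (A k j == -3); last exact: oner_neq0.
by apply: mulf_neq0; [apply: mulf_neq0|]; rewrite shift_eq0.
Qed.

End TFactor.

Definition bimon := (shiftmon * shiftmon)%type.

(* Read through [sym_rel]: the a- and b-components, and the arguments of
   Tfactor _ a and Tfactor _ b in the other components. *)
Record symstate := SymState { sym_a : bimon; sym_b : bimon; sym_fa : bimon; sym_fb : bimon }.

Definition bimon_swap (V : bimon) : bimon := (V.2, V.1).
Definition bimon_map (g : shiftmon -> shiftmon) (V : bimon) : bimon := (g V.1, g V.2).
Definition bimon_cat (V W : bimon) : bimon := (V.1 ++ W.1, V.2 ++ W.2).

Definition sym_swap (s : symstate) : symstate :=
  SymState (bimon_swap (sym_b s)) (bimon_swap (sym_a s))
           (bimon_swap (sym_fb s)) (bimon_swap (sym_fa s)).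

(* Applying T_a, where d_a = e q and Tfactor b a is the monomial [m]. *)
Definition sym_step (e : int) (m : shiftmon) (s : symstate) : symstate :=
  SymState (bimon_map mon_inv (bimon_map (mon_comp [:: (e, 1)]) (sym_a s)))
           (bimon_cat (sym_b s) (bimon_map (mon_comp m) (sym_a s)))
           (bimon_cat (sym_fa s) (sym_a s))
           (sym_fb s).

Definition sym_step_b (e : int) (m : shiftmon) (s : symstate) : symstate :=
  sym_swap (sym_step e m (sym_swap s)).

Definition sym_init : symstate :=
  SymState ([:: (0, 1)], [::]) ([::], [:: (0, 1)]) ([::], [::]) ([::], [::]).

Definition bimon_eqb (V W : bimon) := mon_eqb V.1 W.1 && mon_eqb V.2 W.2.

Definition sym_eqb (s t : symstate) :=
  [&& bimon_eqb (sym_a s) (sym_a t), bimon_eqb (sym_b s) (sym_b t),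
      bimon_eqb (sym_fa s) (sym_fa t) & bimon_eqb (sym_fb s) (sym_fb t)].

Lemma alt_simulation (T S : Type) (R : T -> S -> Prop) f g sf sg m x s :
  (forall x s, R x s -> R (f x) (sf s)) -> (forall x s, R x s -> R (g x) (sg s)) ->
  R x s -> R (alt f g m x) (alt sf sg m s).
Proof.
move=> Hf Hg Rxs; elim: m f g sf sg Hf Hg => [|m IH] f g sf sg Hf Hg //=.
exact/Hf/(IH g f sg sf Hg Hf).
Qed.

Section SymbolicExecution.
Variables (l : nat) (A : 'M[int]_l) (d : 'I_l -> nat) (q : C) (P : tuple_rf l).
Implicit Types (xa xb : ratfun) (Q : tuple_rf l) (s : symstate) (V W : bimon).

Definition bimon_eval (xa xb : ratfun) V := mon_eval q V.1 xa * mon_eval q V.2 xb.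

Definition sym_rel (a b : 'I_l) Q s :=
  [/\ Q a = bimon_eval (P a) (P b) (sym_a s),
      Q b = bimon_eval (P a) (P b) (sym_b s) &
      forall k, k != a -> k != b ->
        Q k = P k * Tfactor A d k a (bimon_eval (P a) (P b) (sym_fa s))
                  * Tfactor A d k b (bimon_eval (P a) (P b) (sym_fb s))].

Lemma bimon_eval_swap xa xb V : bimon_eval xa xb (bimon_swap V) = bimon_eval xb xa V.
Proof. exact: mulrC. Qed.

Lemma bimon_eval_cat xa xb V W :
  bimon_eval xa xb (bimon_cat V W) = bimon_eval xa xb V * bimon_eval xa xb W.
Proof. by rewrite /bimon_eval !mon_eval_cat mulrACA. Qed.

Lemma bimon_eval_comp xa xb m V :
  bimon_eval xa xb (bimon_map (mon_comp m) V) = mon_eval q m (bimon_eval xa xb V).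
Proof. by rewrite /bimon_eval mon_evalM !mon_eval_comp. Qed.

Lemma bimon_eval_inv xa xb V :
  bimon_eval xa xb (bimon_map mon_inv V) = (bimon_eval xa xb V)^-1.
Proof. by rewrite /bimon_eval !mon_eval_inv invfM. Qed.

Lemma bimon_eval_neq0 xa xb V : xa != 0 -> xb != 0 -> bimon_eval xa xb V != 0.
Proof. by move=> xa0 xb0; apply: mulf_neq0; apply: mon_eval_neq0. Qed.

Lemma bimon_eval_eqb xa xb V W : xa != 0 -> xb != 0 -> bimon_eqb V W ->
  bimon_eval xa xb V = bimon_eval xa xb W.
Proof.
move=> xa0 xb0 /andP[eq1 eq2].
by rewrite /bimon_eval (mon_eval_eqb _ xa0 eq1) (mon_eval_eqb _ xb0 eq2).
Qed.

Lemma sym_rel_swap a b Q s : sym_rel a b Q s -> sym_rel b a Q (sym_swap s).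
Proof.
case=> Qa Qb Qk; split; rewrite /sym_swap /= ?bimon_eval_swap //.
by move=> k kb ka; rewrite (Qk k ka kb) mulrAC.
Qed.

Lemma sym_rel_init a b : a != b -> sym_rel a b P sym_init.
Proof.
move=> ab; split; rewrite /bimon_eval /= /mon_eval ?big_nil ?big_seq1.
- by rewrite mulr0z mul0r expr1z shift_id mulr1.
- by rewrite mulr0z mul0r expr1z shift_id mul1r.
- by move=> k _ _; rewrite mulr1 !Tfactor1 !mulr1.
Qed.

Lemma sym_rel_step a b e m Q s :
  a != b -> P a != 0 -> P b != 0 -> (d a)%:R = e%:~R * q ->
  (forall f, f != 0 -> Tfactor A d b a f = mon_eval q m f) ->
  sym_rel a b Q s -> sym_rel a b (Tmap A d a Q) (sym_step e m s).
Proof.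
move=> ab Pa0 Pb0 da Tba [Qa Qb Qk].
have Qa0 := bimon_eval_neq0 (sym_a s) Pa0 Pb0.
split.
- by rewrite TmapE eqxx Qa da bimon_eval_inv bimon_eval_comp mon_eval_single.
- by rewrite TmapE eq_sym (negbTE ab) Qb Qa (Tba _ Qa0) bimon_eval_cat bimon_eval_comp.
- move=> k ka kb; rewrite TmapE (negbTE ka) (Qk k ka kb) Qa bimon_eval_cat TfactorM.
  by rewrite mulrA mulrAC.
Qed.

Lemma sym_rel_step_b a b e m Q s :
  a != b -> P a != 0 -> P b != 0 -> (d b)%:R = e%:~R * q ->
  (forall f, f != 0 -> Tfactor A d a b f = mon_eval q m f) ->
  sym_rel a b Q s -> sym_rel a b (Tmap A d b Q) (sym_step_b e m s).
Proof.
move=> ab Pa0 Pb0 db Tab /sym_rel_swap rel_ba; have ba : b != a by rewrite eq_sym.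
exact: sym_rel_swap (sym_rel_step ba Pb0 Pa0 db Tab rel_ba).
Qed.

Lemma sym_rel_eq a b Q1 Q2 s1 s2 : P a != 0 -> P b != 0 ->
  sym_rel a b Q1 s1 -> sym_rel a b Q2 s2 -> sym_eqb s1 s2 -> Q1 = Q2.
Proof.
move=> Pa0 Pb0 [Q1a Q1b Q1k] [Q2a Q2b Q2k] /and4P[eq_a eq_b eq_fa eq_fb].
apply: functional_extensionality => k.
have [->|ka] := eqVneq k a; first by rewrite Q1a Q2a (bimon_eval_eqb Pa0 Pb0 eq_a).
have [->|kb] := eqVneq k b; first by rewrite Q1b Q2b (bimon_eval_eqb Pa0 Pb0 eq_b).
rewrite (Q1k k ka kb) (Q2k k ka kb).
by rewrite (bimon_eval_eqb Pa0 Pb0 eq_fa) (bimon_eval_eqb Pa0 Pb0 eq_fb).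
Qed.

End SymbolicExecution.

Section CartanMatrix.
Variables (l : nat) (A : 'M[int]_l) (d : 'I_l -> nat).
Hypothesis A_gcm : is_GCM A.
Hypothesis dA_sym : symmetrizes d A.
Let A_diag : forall i, A i i = 2%:Z := A_gcm.1.
Let A_offdiag : forall i j, i != j -> A i j <= 0 := A_gcm.2.1.
Let A_zero_sym : forall i j, A i j = 0 <-> A j i = 0 := A_gcm.2.2.
Implicit Types (x : 'I_l -> rat) (i j k s t v w : 'I_l).

Definition dA i j : rat := ((d i)%:Z * A i j)%:~R.

Definition qform x : rat := \sum_(i < l) \sum_(j < l) x i * dA i j * x j.

Definition dA_mul x w : rat := \sum_(k < l) dA w k * x k.

Definition single w (c : rat) k : rat := if k == w then c else 0.

Lemma dAE i j : dA i j = (d i)%:R * (A i j)%:~R.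
Proof. by rewrite /dA intrM. Qed.

Lemma dAC i j : dA i j = dA j i.
Proof. by rewrite /dA dA_sym. Qed.

Lemma dA_diag i : dA i i = 2 * (d i)%:R.
Proof. by rewrite dAE A_diag mulrC. Qed.

Lemma dA_offdiag i j : i != j -> dA i j <= 0.
Proof. by move=> ij; rewrite dAE mulr_ge0_le0 ?ler0n // lerz0 A_offdiag. Qed.

Lemma sum_single_r (F : 'I_l -> rat) w c : \sum_(j < l) F j * single w c j = F w * c.
Proof.
by rewrite (bigD1 w) //= /single eqxx big1 ?addr0 // => j /negbTE ->; rewrite mulr0.
Qed.

Lemma sum_single_l (F : 'I_l -> rat) w c : \sum_(j < l) single w c j * F j = c * F w.
Proof. by under eq_bigr do rewrite mulrC; rewrite sum_single_r mulrC. Qed.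

Lemma qform_add_single x w c :
  qform (fun k => x k + single w c k) = qform x + 2 * c * dA_mul x w + c ^+ 2 * dA w w.
Proof.
have expand i j : (x i + single w c i) * dA i j * (x j + single w c j) =
    x i * dA i j * x j + (x i * dA i j * single w c j + single w c i * (dA i j * x j))
    + single w c i * dA i j * single w c j.
  by ring.
rewrite /qform; under eq_bigr do under eq_bigr do rewrite expand.
rewrite (eq_bigr (fun i => \sum_(j < l) x i * dA i j * x j
        + (x i * dA i w * c + single w c i * dA_mul x i) + single w c i * dA i w * c)); last first.
  by move=> i _; rewrite !big_split /= !sum_single_r -mulr_sumr.
rewrite !big_split /= (sum_single_l (dA_mul x)).
have -> : \sum_(i < l) x i * dA i w * c = c * dA_mul x w.
  by rewrite mulr_sumr; apply: eq_bigr => i _; rewrite dAC; ring.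
have -> : \sum_(i < l) single w c i * dA i w * c = c * (dA w w * c).
  by rewrite -(sum_single_l (fun i => dA i w * c)); apply: eq_bigr => i _; rewrite mulrA.
ring.
Qed.

Lemma dA_mul_le x w v : (forall k, 0 <= x k) -> x w = 0 -> dA_mul x w <= dA w v * x v.
Proof.
move=> x_ge0 xw0; rewrite /dA_mul (bigD1 v) //= gerDl sumr_le0 // => k kv.
have [->|kw] := eqVneq k w; first by rewrite xw0 mulr0.
by rewrite mulr_le0_ge0 // dA_offdiag // eq_sym.
Qed.

(* The coefficient c = -a_ts/2 minimizes the increase 2 c d_t a_ts + 2 c^2 d_t. *)
Lemma qform_add_bond x s t : (forall k, 0 <= x k) -> x t = 0 -> x s = 1 ->
  qform (fun k => x k + single t (- (A t s)%:~R / 2) k)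
    <= qform x - (d s)%:R * (A s t * A t s)%:~R / 2.
Proof.
move=> x_ge0 xt0 xs1.
have ts : t != s by apply: contra_eqN xt0 => /eqP ->; rewrite xs1 oner_eq0.
have Ats_le0 : (A t s)%:~R <= 0 :> rat by rewrite lerz0 A_offdiag.
have le_mul := dA_mul_le s x_ge0 xt0; rewrite xs1 mulr1 in le_mul.
have sym_ts : (d t)%:R * (A t s)%:~R = (d s)%:R * (A s t)%:~R :> rat.
  by rewrite -!dAE dAC.
have dt_ge0 : 0 <= (d t)%:R :> rat := ler0n _ _.
rewrite qform_add_single dA_diag rmorphM /=.
rewrite dAE in le_mul.
have -> : (d s)%:R * ((A s t)%:~R * (A t s)%:~R) = (d t)%:R * (A t s)%:~R ^+ 2 :> rat.
  by rewrite mulrA -sym_ts expr2 mulrA.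
nra.
Qed.

Definition simple_edge : rel 'I_l := fun u v => (A u v == -1) && (A v u == -1).

Lemma simple_edge_d u v : simple_edge u v -> d u = d v.
Proof.
case/andP => /eqP Auv /eqP Avu; have := dA_sym u v; rewrite Auv Avu !mulrN1.
by move/oppr_inj => [].
Qed.

Lemma simple_path_d u p : path simple_edge u p -> {in u :: p, forall v, d v = d u}.
Proof.
elim: p u => [|w p IH] u /=; first by move=> _ v; rewrite inE => /eqP ->.
case/andP => uw wp v; rewrite inE => /predU1P[-> //|vp].
by rewrite (IH w wp v vp) (simple_edge_d uw).
Qed.

Definition indicator (r : seq 'I_l) k : rat := (k \in r)%:R.

Lemma indicator_ge0 r k : 0 <= indicator r k.
Proof. exact: ler0n. Qed.

Lemma qform_ext x y : x =1 y -> qform x = qform y.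
Proof. by move=> xy; apply: eq_bigr => i _; apply: eq_bigr => j _; rewrite !xy. Qed.

Lemma indicator_cons v r : v \notin r ->
  indicator (v :: r) =1 (fun k => indicator r k + single v 1 k).
Proof.
move=> vr k; rewrite /indicator /single inE.
by have [->|] := eqVneq k v; rewrite ?(negbTE vr) ?add0r ?addr0.
Qed.

Lemma qform_simple_path u p : path simple_edge u p -> uniq (u :: p) ->
  qform (indicator (u :: p)) <= 2 * (d u)%:R.
Proof.
elim: p u => [|w p IH] u /= => [_ _|/andP[uw wp] /andP[up wpu]].
  rewrite (qform_ext (indicator_cons _)) // qform_add_single dA_diag.
  rewrite /qform /dA_mul !big1 ?mulr0 ?add0r ?expr1n ?mul1r // => i _.
    by rewrite /indicator in_nil mulr0.
  by rewrite big1 // => j _; rewrite /indicator in_nil mul0r.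
have Iu0 : indicator (w :: p) u = 0 by rewrite /indicator (negbTE up).
have Iw1 : indicator (w :: p) w = 1 by rewrite /indicator mem_head.
have le_mul := dA_mul_le w (indicator_ge0 _) Iu0; rewrite Iw1 mulr1 in le_mul.
have dAuw : dA u w = - (d u)%:R by case/andP: uw => /eqP Auw _; rewrite dAE Auw mulrN1.
have := IH w wp wpu; rewrite -(simple_edge_d uw) => IHw.
rewrite (qform_ext (indicator_cons up)) qform_add_single dA_diag; lra.
Qed.

Hypothesis dA_posdef : pos_def_sym d A.

Lemma qform_gt0 x k : x k != 0 -> 0 < qform x.
Proof. by move=> xk; apply: dA_posdef; exists k. Qed.

Lemma single_ge0 w c k : 0 <= c -> 0 <= single w c k.
Proof. by rewrite /single; case: ifP. Qed.

Lemma half_cartan_ge0 i j : i != j -> 0 <= - (A i j)%:~R / 2 :> rat.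
Proof. by move=> ij; rewrite mulr_ge0 // oppr_ge0 lerz0 A_offdiag. Qed.

Lemma cartan_prod_le3 i j : i != j -> A i j * A j i <= 3.
Proof.
move=> ij; rewrite leNgt; apply/negP => prod_gt3.
have Ii0 : indicator [:: j] i = 0 by rewrite /indicator inE (negbTE ij).
have Ij1 : indicator [:: j] j = 1 by rewrite /indicator mem_head.
have Qj := qform_simple_path (u := j) (p := [::]) isT isT.
have Qbond := qform_add_bond (indicator_ge0 _) Ii0 Ij1.
have pos : 0 < qform (fun k => indicator [:: j] k + single i (- (A i j)%:~R / 2) k).
  by apply: (@qform_gt0 _ j); rewrite Ij1 /single (eq_sym j) (negbTE ij) addr0 oner_eq0.
have prod4 : 4 <= (A j i * A i j)%:~R :> rat by rewrite -[4]/(4%:~R) ler_int mulrC; lia.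
have := ler_wpM2l (ler0n _ (d j)) prod4; lra.
Qed.

Lemma cartan_bond_simple i j : i != j -> A i j != 0 -> A i j = -1 \/ A j i = -1.
Proof.
move=> ij Aij0; have ji : j != i by rewrite eq_sym.
have Aji0 : A j i != 0 by apply: contra Aij0 => /eqP/A_zero_sym ->.
have := cartan_prod_le3 ij; have := A_offdiag ij; have := A_offdiag ji.
by move: Aij0 Aji0; lia.
Qed.

Lemma no_two_multiple_bonds s p t m :
  path simple_edge s p -> uniq (s :: p) -> t \notin s :: p -> m \notin s :: p ->
  t != m -> 2 <= A s t * A t s -> 2 <= A (last s p) m * A m (last s p) -> False.
Proof.
move=> sp usp tp mp tm st_multi km_multi; set k := last s p.
have kp : k \in s :: p := mem_last s p.
have st : s != t by apply: contraNneq tp => <-; rewrite mem_head.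
have kt : k != t by apply: contraNneq tp => <-.
have km : k != m by apply: contraNneq mp => <-.
have sm : s != m by apply: contraNneq mp => <-; rewrite mem_head.
set x := indicator (s :: p).
have xt0 : x t = 0 by rewrite /x /indicator (negbTE tp).
have xs1 : x s = 1 by rewrite /x /indicator mem_head.
have Qx : qform x <= 2 * (d s)%:R := qform_simple_path sp usp.
have Qy := qform_add_bond (indicator_ge0 _) xt0 xs1.
set y := fun i => x i + _ in Qy.
have y_ge0 i : 0 <= y i.
  by rewrite addr_ge0 ?indicator_ge0 ?single_ge0 ?half_cartan_ge0 // eq_sym.
have ym0 : y m = 0.
  by rewrite /y /x /indicator (negbTE mp) /single (eq_sym m t) (negbTE tm) addr0.
have yk1 : y k = 1 by rewrite /y /x /indicator kp /single (negbTE kt) addr0.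
have Qz := qform_add_bond y_ge0 ym0 yk1.
have pos : 0 < qform (fun i => y i + single m (- (A m k)%:~R / 2) i).
  apply: (@qform_gt0 _ s); rewrite /y /x /indicator mem_head /single.
  by rewrite (negbTE st) (negbTE sm) !addr0 oner_eq0.
have dk : d k = d s := simple_path_d sp kp.
have multi_ge (u v : 'I_l) : 2 <= A u v * A v u ->
    2 * (d s)%:R <= (d s)%:R * (A u v * A v u)%:~R :> rat.
  by move=> uv; rewrite mulrC ler_wpM2l // -[2]/(2%:~R) ler_int.
have := multi_ge _ _ st_multi; have := multi_ge _ _ km_multi.
rewrite dk -/x in Qz Qy; lra.
Qed.

Lemma simple_connect_d u v : connect simple_edge u v -> d v = d u.
Proof. by case/connectP => p up ->; apply: (simple_path_d up); exact: mem_last. Qed.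

Lemma no_joined_multiple_bonds s t k m :
  2 <= A s t * A t s -> 2 <= A k m * A m k -> t != m ->
  ~~ connect simple_edge s t -> ~~ connect simple_edge s m ->
  connect simple_edge s k -> False.
Proof.
move=> st_multi km_multi tm not_st not_sm /connectP[p sp kE]; rewrite {k}kE in km_multi.
move: km_multi; case: (shortenP sp) => p' sp' usp' _ km_multi.
have off_path v : ~~ connect simple_edge s v -> v \notin s :: p'.
  by apply: contra => /(path_connect sp').
exact: (no_two_multiple_bonds sp' usp' (off_path _ not_st) (off_path _ not_sm) tm).
Qed.

Hypothesis d_coprime_pos : coprime_pos d.
Hypothesis A_indecomposable : indecomposable A.
Let d_pos : forall i, (0 < d i)%N := d_coprime_pos.1.
Let d_coprime : (\big[gcdn/0]_(i < l) d i = 1)%N := d_coprime_pos.2.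

(* The short node of a multiple bond: the nodes simply linked to it or to its
   long neighbour have weights divisible by its weight, and by indecomposability
   any other node is reached only through a second multiple bond. *)
Lemma short_node_d1 i j : 2 <= A i j * A j i -> A j i = -1 -> d i = 1%N.
Proof.
move=> ij_multi Aji.
have ij : i != j by apply/eqP => eij; move: Aji; rewrite eij A_diag.
have Aij : A i j <= -2 by move: ij_multi; rewrite Aji; lia.
have dj : d j = (`|A i j| * d i)%N.
  by have := dA_sym i j; rewrite Aji; have := d_pos i; nia.
have dij : d i != d j by apply/eqP; have := d_pos i; nia.
set J := [set k | connect simple_edge i k || connect simple_edge j k].
have dvd_J k : k \in J -> (d i %| d k)%N.
  rewrite inE => /orP[] /simple_connect_d ->; first exact: dvdnn.
  by rewrite dj dvdn_mull.
have [JT|JnT] := eqVneq J setT.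
  apply/eqP; rewrite -dvdn1 -d_coprime; elim/big_ind: _ => // [u v|k _].
    by rewrite dvdn_gcd => -> ->.
  by apply: dvd_J; rewrite JT inE.
have J0 : J != set0 by apply/set0Pn; exists i; rewrite inE connect0.
have [k [m [kJ [mJ Akm]]]] := A_indecomposable J0 JnT.
have km : k != m by apply: contraNneq mJ => <-.
have not_simple : ~~ simple_edge k m.
  apply: contra mJ => km_simple; move: kJ; rewrite !inE.
  by case/orP => /connect_trans/(_ (connect1 km_simple)) ->; rewrite ?orbT.
have km_multi : 2 <= A k m * A m k.
  have Amk : A m k != 0 by apply/eqP => /A_zero_sym/eqP; apply/negP.
  have mk : m != k by rewrite eq_sym.
  have := A_offdiag km; have := A_offdiag mk.
  move: not_simple Akm Amk; rewrite /simple_edge negb_and.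
  by case/orP => /eqP ? /eqP ? /eqP ?; nia.
have jm : j != m by apply: contraNneq mJ => <-; rewrite inE connect0 orbT.
have im : i != m by apply: contraNneq mJ => <-; rewrite inE connect0.
exfalso; move: kJ; rewrite inE => /orP[ik|jk].
- apply: (no_joined_multiple_bonds ij_multi km_multi jm _ _ ik).
    by apply: contra dij => /simple_connect_d ->.
  by apply: contra mJ; rewrite inE => ->.
- apply: (no_joined_multiple_bonds (t := i) _ km_multi im _ _ jk).
  + by rewrite mulrC.
  + by apply: contra dij => /simple_connect_d ->.
  + by apply: contra mJ; rewrite inE => ->; rewrite orbT.
Qed.

End CartanMatrix.

Lemma two_half (x : C) : 2%:~R * Defs.half x = x.
Proof. by rewrite /Defs.half mulrC divfK // pnatr_eq0. Qed.

Lemma int_half (n : int) : n%:~R * Defs.half 1 = Defs.half n%:~R.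
Proof. by rewrite /Defs.half mul1r. Qed.

Section BraidAction.
Variables (l : nat) (A : 'M[int]_l) (d : 'I_l -> nat).
Implicit Types (P : tuple_rf l).

Lemma Tmap_inP j P : inP P -> inP (Tmap A d j P).
Proof.
move=> P_neq0 k; rewrite TmapE; case: (k == j).
  by rewrite invr_eq0 shift_eq0.
by apply: mulf_neq0; last apply: Tfactor_neq0.
Qed.

Definition Tinv_at j P : ratfun := (shift (- (d j)%:R) (P j))^-1.

Definition Tinv j P : tuple_rf l :=
  fun k => if k == j then Tinv_at j P else P k / Tfactor A d k j (Tinv_at j P).

Lemma Tinv_at_neq0 j P : inP P -> Tinv_at j P != 0.
Proof. by move=> P_neq0; rewrite invr_eq0 shift_eq0. Qed.

Lemma Tinv_inP j P : inP P -> inP (Tinv j P).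
Proof.
move=> P_neq0 k; rewrite /Tinv; case: (k == j); first exact: Tinv_at_neq0.
by rewrite mulf_neq0 // invr_eq0 Tfactor_neq0 // Tinv_at_neq0.
Qed.

Lemma TinvK j P : inP P -> Tinv j (Tmap A d j P) = P.
Proof.
move=> P_neq0; have Tinv_atE : Tinv_at j (Tmap A d j P) = P j.
  by rewrite /Tinv_at TmapE eqxx shiftV shiftA addNr shift_id invrK.
apply: functional_extensionality => k; rewrite /Tinv Tinv_atE.
have [->|kj] := eqVneq k j; first reflexivity.
by rewrite TmapE (negbTE kj) mulfK // Tfactor_neq0.
Qed.

Lemma TmapK j P : inP P -> Tmap A d j (Tinv j P) = P.
Proof.
move=> P_neq0; apply: functional_extensionality => k; rewrite TmapE /Tinv eqxx.
have [->|kj] := eqVneq k j.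
  by rewrite /Tinv_at shiftV shiftA addrN shift_id invrK.
by rewrite divfK // Tfactor_neq0 // Tinv_at_neq0.
Qed.

Lemma braid_commuting i j P : i != j -> A i j = 0 -> A j i = 0 ->
  Tmap A d i (Tmap A d j P) = Tmap A d j (Tmap A d i P).
Proof.
move=> ij Aij Aji; have ji : (j == i) = false by rewrite eq_sym (negbTE ij).
have Tij f : Tfactor A d i j f = 1 by rewrite /Tfactor Aij.
have Tji f : Tfactor A d j i f = 1 by rewrite /Tfactor Aji.
apply: functional_extensionality => k; rewrite !TmapE (negbTE ij) ji !Tij !Tji !mulr1.
have [->|ki] := eqVneq k i; first by rewrite (negbTE ij) !Tij mulr1.
have [->|kj] := eqVneq k j; first by rewrite !Tji mulr1.
exact: mulrAC.
Qed.

Lemma braid_symbolic i j q ei ej mji mij m P : i != j -> inP P ->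
  (d i)%:R = ei%:~R * q -> (d j)%:R = ej%:~R * q ->
  (forall f, f != 0 -> Tfactor A d j i f = mon_eval q mji f) ->
  (forall f, f != 0 -> Tfactor A d i j f = mon_eval q mij f) ->
  sym_eqb (alt (sym_step ei mji) (sym_step_b ej mij) m sym_init)
          (alt (sym_step_b ej mij) (sym_step ei mji) m sym_init) ->
  alt (Tmap A d i) (Tmap A d j) m P = alt (Tmap A d j) (Tmap A d i) m P.
Proof.
move=> ij P_neq0 di dj Tji Tij eq_sym_runs.
have step_i Q s :
    sym_rel A d q P i j Q s -> sym_rel A d q P i j (Tmap A d i Q) (sym_step ei mji s).
  exact: sym_rel_step.
have step_j Q s :
    sym_rel A d q P i j Q s -> sym_rel A d q P i j (Tmap A d j Q) (sym_step_b ej mij s).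
  exact: sym_rel_step_b.
have init := sym_rel_init A d q P ij.
exact: (sym_rel_eq (P_neq0 i) (P_neq0 j) (alt_simulation m step_i step_j init)
                   (alt_simulation m step_j step_i init) eq_sym_runs).
Qed.

Lemma braid_A2 i j P : i != j -> inP P -> A i j = -1 -> A j i = -1 -> d i = d j ->
  alt (Tmap A d i) (Tmap A d j) 3 P = alt (Tmap A d j) (Tmap A d i) 3 P.
Proof.
move=> ij P_neq0 Aij Aji dij.
apply: (@braid_symbolic i j (Defs.half (d i)%:R) 2 2 [:: (1, 1)] [:: (1, 1)] _ P ij P_neq0).
- by rewrite two_half.
- by rewrite -dij two_half.
- by move=> f _; rewrite (Tfactor_simple d f Aji) mon_eval_single mul1r dij.
- by move=> f _; rewrite (Tfactor_simple d f Aij) mon_eval_single mul1r.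
- by vm_compute.
Qed.

Lemma braid_B2 i j P : i != j -> inP P -> A i j = -2 -> A j i = -1 -> d i = 1%N -> d j = 2%N ->
  alt (Tmap A d i) (Tmap A d j) 4 P = alt (Tmap A d j) (Tmap A d i) 4 P.
Proof.
move=> ij P_neq0 Aij Aji di dj.
apply: (@braid_symbolic i j (Defs.half 1) 2 4 [:: (2, 1)] [:: (2, 1); (0, 1)] _ P ij P_neq0).
- by rewrite two_half di.
- by rewrite [4%:~R](intrM _ 2 2) -mulrA two_half mulr1 dj pmulrn.
- by move=> f _; rewrite (Tfactor_simple d f Aji) mon_eval_single dj int_half pmulrn.
- move=> f _; rewrite (Tfactor_double d f Aij) mon_eval_cons1 mon_eval_single.
  by rewrite two_half mulr0z mul0r shift_id.
- by vm_compute.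
Qed.

Lemma braid_G2 i j P : i != j -> inP P -> A i j = -3 -> A j i = -1 -> d i = 1%N -> d j = 3%N ->
  alt (Tmap A d i) (Tmap A d j) 6 P = alt (Tmap A d j) (Tmap A d i) 6 P.
Proof.
move=> ij P_neq0 Aij Aji di dj.
apply: (@braid_symbolic i j (Defs.half 1) 2 6 [:: (3, 1)] [:: (3, 1); (1, 1); (-1, 1)] _ P
  ij P_neq0).
- by rewrite two_half di.
- by rewrite [6%:~R](intrM _ 2 3) -mulrA int_half two_half dj pmulrn.
- by move=> f _; rewrite (Tfactor_simple d f Aji) mon_eval_single dj int_half pmulrn.
- move=> f _; rewrite (Tfactor_triple d f Aij) 2!mon_eval_cons1 mon_eval_single mulrA.
  by rewrite mulr1z mulrN1z mul1r mulN1r int_half pmulrn.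
- by vm_compute.
Qed.

End BraidAction.

Lemma braid_mC l (A : 'M[int]_l) i j : braid_m A i j = braid_m A j i.
Proof. by rewrite /braid_m mulrC. Qed.

Section SimpleCartan.
Variables (l : nat) (A : 'M[int]_l) (d : 'I_l -> nat).
Hypothesis cartan : simple_cartan A d.
Let A_gcm : is_GCM A := cartan.2.1.
Let A_ind : indecomposable A := cartan.2.2.1.
Let dA_sym : symmetrizes d A := cartan.2.2.2.1.
Let d_coprime_pos : coprime_pos d := cartan.2.2.2.2.1.
Let dA_posdef : pos_def_sym d A := cartan.2.2.2.2.2.

Lemma braid_bond i j P : i != j -> inP P -> A j i = -1 ->
  alt (Tmap A d i) (Tmap A d j) (braid_m A i j) P =
  alt (Tmap A d j) (Tmap A d i) (braid_m A i j) P.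
Proof.
move=> ij P_neq0 Aji.
have Aij0 : A i j != 0 by apply/eqP => /A_gcm.2.2; rewrite Aji.
have := cartan_prod_le3 A_gcm dA_sym dA_posdef ij.
have := A_gcm.2.1 i j ij; have := dA_sym i j; rewrite Aji => dsym Aij_le0 le3.
have short_d1 : 2 <= A i j * A j i -> d i = 1%N.
  by move=> multi; apply: (short_node_d1 A_gcm dA_sym dA_posdef d_coprime_pos A_ind multi).
have : A i j = -1 \/ A i j = -2 \/ A i j = -3 by move: Aij0; lia.
case=> [Aij|[Aij|Aij]]; rewrite /braid_m Aij Aji /=.
- by apply: braid_A2 => //; lia.
- have di : d i = 1%N by apply: short_d1; rewrite Aij Aji.
  by apply: braid_B2 => //; move: dsym; rewrite Aij di; lia.
- have di : d i = 1%N by apply: short_d1; rewrite Aij Aji.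
  by apply: braid_G2 => //; move: dsym; rewrite Aij di; lia.
Qed.

End SimpleCartan.

Theorem mainTheorem1 (l : nat) (A : 'M[int]_l) (d : 'I_l -> nat) :
  simple_cartan A d ->
  (forall j : 'I_l,
     (forall P, inP P -> inP (Tmap A d j P)) /\
     exists U : tuple_rf l -> tuple_rf l,
       (forall P, inP P -> inP (U P)) /\
       (forall P, inP P -> U (Tmap A d j P) = P) /\
       (forall P, inP P -> Tmap A d j (U P) = P)) /\
  (forall i j : 'I_l, i != j -> forall P, inP P ->
     alt (Tmap A d i) (Tmap A d j) (braid_m A i j) P =
     alt (Tmap A d j) (Tmap A d i) (braid_m A i j) P).
Proof.
move=> cartan; split=> [j|i j ij P P_neq0].
  split=> [P|]; first exact: Tmap_inP.
  exists (Tinv A d j); split=> [P|]; first exact: Tinv_inP.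
  by split=> P; [exact: TinvK | exact: TmapK].
have A_gcm : is_GCM A := cartan.2.1.
have [Aij0|Aij0] := eqVneq (A i j) 0.
  have Aji0 : A j i = 0 by apply/A_gcm.2.2.
  by rewrite /braid_m Aij0 Aji0; apply: braid_commuting.
have [Aji|Aij] := cartan_bond_simple A_gcm cartan.2.2.2.1 cartan.2.2.2.2.2 ij Aij0.
  by rewrite braid_mC; symmetry; apply: braid_bond; rewrite // eq_sym.
exact: braid_bond.
Qed.
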